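(* $\varphi(I_n^{0,1})=\varphi(I_n^0)=\mathring{\mathcal{P}}_n$.
   Context: $B_n$ is the group of signed permutations $w=w_1\dots w_n$ of $[n]$ (bijections of $\{\pm1,\dots,\pm n\}$ with $w(-i)=-w(i)$), values ordered $\cdots<-2<-1<1<2<\cdots$, with $w_0=0$; $\mathrm{Des}(w)=\{i\in\{0,\dots,n-1\}: w_i>w_{i+1}\}$. For $J\subseteq\{0,\dots,n-1\}$, $X_J=\sum_{\mathrm{Des}(w)\subseteq J}w\in\mathbb{Q}B_n$. $I_n^0=\mathrm{span}\{X_J: 0\in J\}$ and $I_n^{0,1}=\mathrm{span}\{X_J: 0\in J \text{ or } 1\in J\}$. $\varphi:\mathbb{Q}B_n\to\mathbb{Q}\mathfrak{S}_n$ is the linear map forgetting signs, $w\mapsto|w_1|\dots|w_n|$. For $u\in\mathfrak{S}_n$, $\mathring{\mathrm{Peak}}(u)=\{i\in\{2,\dots,n-1\}: u_{i-1}<u_i>u_{i+1}\}$; $\mathring{\mathcal{F}}_n$ is the set of subsets of $\{2,\dots,n-1\}$ with no two consecutive integers; $\mathring{P}_F=\sum_{\mathring{\mathrm{Peak}}(u)=F}u$ and $\mathring{\mathcal{P}}_n=\mathrm{span}\{\mathring{P}_F: F\in\mathring{\mathcal{F}}_n\}$. *)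

From HB Require Import structures.
From mathcomp Require Import all_boot all_order all_fingroup all_algebra.
Set Implicit Arguments. Unset Strict Implicit. Unset Printing Implicit Defensive.
Import GRing.Theory Num.Theory.
Local Open Scope ring_scope.

Definition grpalg (G : finType) := {ffun G -> rat^o}.
Definition gelt (G : finType) (g : G) : grpalg G := [ffun h => (h == g)%:R].

(* Signed permutations of [n]: a pair (s, e) with s : 'S_n and e a sign vector;
   it represents w with w_(i+1) = (-1)^(e i) * (s i + 1) for i : 'I_n. *)
Definition signed_perm (n : nat) := ('S_n * {ffun 'I_n -> bool})%type.

(* w_k for k in 0..n (with w_0 = 0), as an integer. *)
Definition sval (n : nat) (w : signed_perm n) (k : nat) : int :=
  if k is k'.+1 then
    (if @insub _ (fun m => m < n)%N 'I_n k' is Some j then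
       (if w.2 j then - ((w.1 j).+1)%:Z else ((w.1 j).+1)%:Z)
     else 0)
  else 0.

(* Des(w) as a subset of {0,...,n-1} (i : 'I_n stands for i). *)
Definition Des (n : nat) (w : signed_perm n) : {set 'I_n} :=
  [set i : 'I_n | sval w i > sval w i.+1].

Definition X (n : nat) (J : {set 'I_n}) : grpalg (signed_perm n) :=
  \sum_(w : signed_perm n | Des w \subset J) gelt w.

(* phi : Q B_n -> Q S_n, w |-> |w_1| ... |w_n|, extended linearly. *)
Definition phi_fun (n : nat) (f : grpalg (signed_perm n)) : grpalg 'S_n :=
  [ffun u => \sum_(w : signed_perm n | w.1 == u) f w].
Definition phi (n : nat) : 'Hom(grpalg (signed_perm n), grpalg 'S_n) :=
  linfun (@phi_fun n).

Lemma phi_fun_linear n : linear (@phi_fun n).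
Proof.
move=> a f g; apply/ffunP=> u; rewrite !ffunE.
rewrite scaler_sumr -big_split /=.
by apply: eq_bigr => w _; rewrite !ffunE.
Qed.

Definition I0 (n : nat) : {vspace grpalg (signed_perm n)} :=
  <<[seq X J | J in [pred J : {set 'I_n} | [exists i in J, val i == 0%N]]]>>%VS.
Definition I01 (n : nat) : {vspace grpalg (signed_perm n)} :=
  <<[seq X J | J in [pred J : {set 'I_n} | [exists i in J, val i <= 1]%N]]>>%VS.

(* u_k for 1 <= k <= n, the value (1-based) of u at position k. *)
Definition uval (n : nat) (u : 'S_n) (k : nat) : nat :=
  if @insub _ (fun m => m < n)%N 'I_n k.-1 is Some j then (u j).+1 else 0.

(* interior peak set, positions in {2..n-1} represented in 'I_n.+1 *)
Definition Peak (n : nat) (u : 'S_n) : {set 'I_n.+1} :=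
  [set i : 'I_n.+1 | [&& 1 < i, i < n, uval u i.-1 < uval u i
                       & uval u i.+1 < uval u i]%N].

Definition Fring (n : nat) : pred {set 'I_n.+1} :=
  fun F => (F \subset [set i : 'I_n.+1 | (1 < i < n)%N])
            && [forall i in F, forall j in F, (val i).+1 != val j].

Definition Pk (n : nat) (F : {set 'I_n.+1}) : grpalg 'S_n :=
  \sum_(u : 'S_n | Peak u == F) gelt u.

Definition Pspace (n : nat) : {vspace grpalg 'S_n} :=
  <<[seq Pk F | F : {set 'I_n.+1} in @Fring n]>>%VS.

(* The non-descent condition at a position i of a signed permutation (u, e)
   constrains exactly one sign: that of the letter of larger absolute value
   among w_i, w_(i+1).  Two positions outside J constrain the same sign only at
   a peak p of u with p-1, p not in J (or at positions 0 and 1, excluded when J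
   meets {0, 1}), and then with opposite values.  Hence, when J meets {0, 1},
   phi(X_J) = 2^|J| * sum of the u with Peak(u) in J ∪ (J+1), which lies in the
   peak space P; this gives phi(I^0) <= phi(I^{0,1}) <= P.
   Conversely, A(S) = sum of the u with Peak(u) in S lies in phi(I^0): directly
   when S has no isolated point (take J = {0} ∪ {i | i, i+1 in S}), and in
   general via A(S) = A(S - p) + A(S + (p+1)) - A(S + (p+1) - p), valid since
   peaks are never adjacent.  Inclusion-exclusion over F then yields every P_F. *)

From Pilot Require Import Defs.
From HB Require Import structures.
From mathcomp Require Import all_boot all_order all_fingroup all_algebra.
From mathcomp Require Import zify.
Set Implicit Arguments. Unset Strict Implicit. Unset Printing Implicit Defensive.
Import Order.TTheory GRing.Theory Num.Theory.

Lemma sum_gelt (G : finType) (P : pred G) :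
  (\sum_(g | P g) gelt g)%R = [ffun h => (P h)%:R%R].
Proof.
apply/ffunP=> h; rewrite sum_ffunE !ffunE.
case: (boolP (P h)) => Ph.
  rewrite (bigD1 h) //= ffunE eqxx big1 ?addr0 // => g /andP[_ gh].
  by rewrite ffunE eq_sym (negbTE gh).
by apply: big1 => g Pg; rewrite ffunE; case: eqP => // hg; rewrite hg Pg in Ph.
Qed.

Lemma card_ffun_constrained (I K : finType) (A : {set I}) (t : I -> K) (v : I -> bool) :
  {in A &, injective t} ->
  #|[set e : {ffun K -> bool} | [forall i in A, e (t i) == v i]]| = 2 ^ (#|K| - #|A|).
Proof.
move=> t_inj.
pose C k : pred bool := [pred b | [forall i in A, (t i == k) ==> (b == v i)]].
rewrite (@eq_card _ _ (family C)); last first.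
  move=> e; rewrite inE; apply/forall_inP/familyP => [eA k | eC i iA].
    by rewrite inE; apply/forall_inP => i iA; apply/implyP => /eqP <-; apply: eA.
  by have /forall_inP/(_ i iA)/implyP := eC (t i); apply.
have card_C k : #|C k| = if k \in t @: A then 1 else 2.
  case: imsetP => [[i iA ->]|tA].
    rewrite -(card1 (v i)); apply: eq_card => b; rewrite !inE.
    apply/forall_inP/eqP => [bA | -> j jA]; first by apply/eqP/(implyP (bA i iA)).
    by apply/implyP => /eqP/t_inj-> //.
  rewrite -card_bool; apply: eq_card => b; rewrite !inE; apply/forall_inP => i iA.
  by apply/implyP => /eqP ti; case: tA; exists i.
rewrite card_family foldrE big_image /= (eq_bigr _ (fun k _ => card_C k)).
rewrite (eq_bigr (fun k => if k \notin t @: A then 2 else 1)) => [|k _]; last first.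
  by case: (k \in _).
rewrite -big_mkcondr prod_nat_const -(card_in_imset t_inj) -(cardsC (t @: A)) addKn.
by congr (_ ^ _); apply: eq_card => k; rewrite !inE.
Qed.

Lemma signed_le (a b : nat) (ea eb : bool) : a != b ->
  ((if ea then - (a.+1)%:Z else (a.+1)%:Z) <= (if eb then - (b.+1)%:Z else (b.+1)%:Z))%R
  = (if (a < b)%N then ~~ eb else ea).
Proof. by move=> /eqP ab; case: ea; case: eb; case: ltnP => ?; apply/idP/idP; lia. Qed.

HB.instance Definition _ n :=
  GRing.isLinear.Build _ _ _ _ (@phi_fun n) (@phi_fun_linear n).

Section PeakImage.
Variable m : nat.
Local Notation n := m.+1.

(* [letter s k] is [|w_(k+1)| - 1]; descent positions [i : 'I_n] compare
   [letter s i.-1] with [letter s i]. *)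
Definition letter (s : 'S_n) (k : nat) : nat := s (inord k).

Definition lowered (s : 'S_n) (i : 'I_n) : bool :=
  (0 < i)%N && (letter s i < letter s i.-1)%N.

(* Position [i] is not a descent iff, among [w_i] and [w_(i+1)], the letter of
   larger absolute value is negative exactly when it is [w_i] (for [i = 0]:
   [w_1 > 0]); so it constrains the single sign [e (sign_target s i)]. *)
Definition sign_target (s : 'S_n) (i : 'I_n) : 'I_n :=
  if lowered s i then inord i.-1 else i.

Lemma letter_inj (s : 'S_n) k l : (k < n)%N -> (l < n)%N -> letter s k = letter s l -> k = l.
Proof.
move=> kn ln /val_inj/perm_inj/(congr1 val).
by rewrite /= !inordK.
Qed.

Lemma sval_succ (w : signed_perm n) k : (k < n)%N ->
  Defs.sval w k.+1 = (if w.2 (inord k) then - (letter w.1 k).+1%:Z else (letter w.1 k).+1%:Z)%R.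
Proof.
move=> kn; rewrite /Defs.sval; case: insubP => [j _ /= jk|]; last by rewrite kn.
by rewrite /letter -jk inord_val.
Qed.

Lemma notin_Des (s : 'S_n) e (i : 'I_n) :
  (i \notin Des (s, e)) = (e (sign_target s i) == lowered s i).
Proof.
rewrite inE -leNgt /sign_target /lowered; case: i => -[|k] kn; rewrite [nat_of_ord _]/=.
  rewrite sval_succ // /letter.
  have -> : (inord 0 : 'I_n) = Ordinal kn by apply: val_inj; rewrite /= inordK.
  by rewrite /=; case: (e _).
rewrite !sval_succ ?(ltnW kn) //= signed_le; last first.
  by apply/eqP=> /letter_inj; lia.
have -> : (inord k.+1 : 'I_n) = Ordinal kn by apply: val_inj; rewrite /= inordK.
case: ltngtP => [_|_|/letter_inj]; rewrite ?eqb_id ?eqbF_neg //; lia.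
Qed.

Lemma Des_subsetE (s : 'S_n) e (J : {set 'I_n}) :
  (Des (s, e) \subset J) = [forall i in ~: J, e (sign_target s i) == lowered s i].
Proof.
apply/subsetP/forall_inP => [DJ i | eJ i].
  by rewrite inE -notin_Des; apply: contra; apply: DJ.
by apply: contraLR => iJ; rewrite notin_Des eJ // inE.
Qed.

Lemma sign_target_collision (s : 'S_n) (i j : 'I_n) : (i < j)%N ->
  sign_target s i = sign_target s j -> [/\ j = i.+1 :> nat, ~~ lowered s i & lowered s j].
Proof.
rewrite /sign_target => ij; have := ltn_ord j.
case: (boolP (lowered s i)) => [/andP[i0 _]|_]; case: (boolP (lowered s j)) => [/andP[j0 _]|_].
all: move=> jn /(congr1 val) /=; rewrite ?inordK; try lia.
all: by move=> ?; split; lia.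
Qed.

Lemma uval_succ (u : 'S_n) k : (k < n)%N -> uval u k.+1 = (letter u k).+1.
Proof.
move=> kn; rewrite /uval /=; case: insubP => [j _ /= jk|]; last by rewrite kn.
by rewrite /letter -jk inord_val.
Qed.

Lemma Peak_lowered (u : 'S_n) (p : 'I_n.+1) : (p \in Peak u) =
  [&& 1 < p, p < n, ~~ lowered u (inord p.-1) & lowered u (inord p)]%N.
Proof.
rewrite inE /lowered; case: p => -[|[|q]] //= qn.
case: (ltnP q.+2 n) => //= q2n.
rewrite !inordK ?uval_succ //=; try lia.
rewrite !ltnS ltn_neqAle -leqNgt; case: eqVneq => [/letter_inj|] //=; lia.
Qed.

Definition peak_support (J : {set 'I_n}) : pred nat :=
  [pred p | (p.-1 \in [seq val i | i in J]) || (p \in [seq val i | i in J])].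

Lemma mem_image_inord (J : {set 'I_n}) k :
  (k < n)%N -> (k \in [seq val i | i in J]) = (inord k \in J).
Proof. by move=> kn; rewrite -[k in LHS](inordK kn) mem_image //; apply: val_inj. Qed.

Lemma sign_target_injective (s : 'S_n) (J : {set 'I_n}) : [exists i in J, i <= 1]%N ->
  [forall p in Peak s, peak_support J p] -> {in ~: J &, injective (sign_target s)}.
Proof.
move=> J01 /forall_inP covered.
suff no_collision i j : i \in ~: J -> j \in ~: J -> (i < j)%N ->
    sign_target s i = sign_target s j -> False.
  move=> i j iJ jJ; case: (ltngtP i j) => [ij|ji|/val_inj //] tij; exfalso.
    exact: no_collision iJ jJ ij tij.
  exact: no_collision jJ iJ ji (esym tij).
rewrite !inE => iJ jJ ij /(sign_target_collision ij) [ji li lj].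
have i_gt0 : (0 < i)%N.
  case/exists_inP: J01 => k kJ k1; rewrite lt0n; apply/negP => /eqP i0.
  have /orP[] : (k == i) || (k == j) by rewrite -!val_eqE /=; lia.
    by move/eqP=> ki; rewrite ki (negbTE iJ) in kJ.
  by move/eqP=> kj; rewrite kj (negbTE jJ) in kJ.
have jP : inord j \in Peak s.
  rewrite Peak_lowered inordK ?inord_val ?lj; last by have := ltn_ord j; lia.
  rewrite ji /= inord_val li -ji ltn_ord andbT; lia.
have := covered _ jP; rewrite /peak_support /= inordK; last by have := ltn_ord j; lia.
by rewrite ji /= -ji !(mem_image val_inj) (negbTE iJ) (negbTE jJ).
Qed.

Lemma card_Des_subset (s : 'S_n) (J : {set 'I_n}) : [exists i in J, i <= 1]%N ->
  #|[set e | Des (s, e) \subset J]| =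
  if [forall p in Peak s, peak_support J p] then 2 ^ #|J| else 0.
Proof.
move=> J01.
have -> : [set e | Des (s, e) \subset J] =
    [set e : {ffun 'I_n -> bool} | [forall i in ~: J, e (sign_target s i) == lowered s i]].
  by apply/setP => e; rewrite !inE Des_subsetE.
case: ifP => [covered | /forall_inPn [p]].
  rewrite card_ffun_constrained; last exact: sign_target_injective.
  by have := cardsC J; rewrite card_ord => ?; congr (_ ^ _); lia.
rewrite Peak_lowered /peak_support /= negb_or => /and4P[p1 pn nlp lp].
rewrite !mem_image_inord; try lia.
move=> /andP[iJ jJ]; apply/eqP; rewrite cards_eq0; apply/eqP/setP => e; rewrite !inE.
apply/negbTE/forall_inP => eJ.
(* Positions p-1 and p both constrain the sign of w_p, in opposite ways. *)
have := eJ (inord p); have := eJ (inord p.-1).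
rewrite !inE iJ jJ /sign_target (negbTE nlp) lp inordK //.
by move=> /(_ isT)/eqP-> /(_ isT).
Qed.

Definition peaks_within (S : pred nat) : grpalg 'S_n :=
  (\sum_(u : 'S_n | [forall p in Peak u, S p]) gelt u)%R.

Lemma peaks_withinE S u : peaks_within S u = [forall p in Peak u, S p]%:R%R.
Proof. by rewrite /peaks_within sum_gelt ffunE. Qed.

Lemma phi_X (J : {set 'I_n}) : [exists i in J, i <= 1]%N ->
  phi n (X J) = ((2 ^ #|J|)%:R *: peaks_within (peak_support J))%R.
Proof.
move=> J01; apply/ffunP => u; rewrite lfunE !ffunE peaks_withinE.
transitivity (\sum_(w : signed_perm n | (w.1 == u) && true) X J (w.1, w.2))%R.
  by apply: eq_big => -[s e] //=; rewrite andbT.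
rewrite -(pair_big (fun s => s == u) xpredT (fun s e => X J (s, e))) big_pred1_eq /=.
under eq_bigr => e _ do rewrite /X sum_gelt ffunE.
under eq_bigr => e _ do rewrite mulrb.
rewrite -big_mkcond sumr_const -cardsE card_Des_subset //.
by case: ifP; rewrite ?scaler0 // -[LHS]mulr1.
Qed.

Lemma Peak_nonadjacent (u : 'S_n) (p q : 'I_n.+1) :
  p \in Peak u -> q \in Peak u -> q != p.+1 :> nat.
Proof.
rewrite !Peak_lowered => /and4P[_ _ _ lp] /and4P[_ _ nlq _].
by apply: contraNneq nlq => /= ->; rewrite lp.
Qed.

Lemma Fring_Peak (u : 'S_n) : Fring (Peak u).
Proof.
apply/andP; split.
  by apply/subsetP => p; rewrite Peak_lowered inE => /and4P[-> ->].
apply/forall_inP => p pP; apply/forall_inP => q qP.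
by rewrite eq_sym; apply: Peak_nonadjacent pP qP.
Qed.

Lemma Pk_Pspace F : Pk F \in Pspace n.
Proof.
case FF: (Fring F); first by apply: memv_span; apply: image_f.
rewrite /Pk big_pred0 ?mem0v // => u.
by apply/negbTE; apply: contraFN FF => /eqP <-; apply: Fring_Peak.
Qed.

Lemma peaks_within_Pspace S : peaks_within S \in Pspace n.
Proof.
rewrite /peaks_within (partition_big (@Peak n) (fun F => [forall p in F, S p])) //=.
apply: memv_suml => F FS; rewrite (eq_bigl (fun u => Peak u == F)) ?Pk_Pspace // => u.
by case: eqP => [->|]; rewrite ?FS ?andbF.
Qed.

Lemma phi_I01_sub_Pspace : (phi n @: I01 n <= Pspace n)%VS.
Proof.
rewrite limg_span; apply/span_subvP => _ /mapP[_ /imageP[J J01 ->] ->].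
by rewrite phi_X // memvZ // peaks_within_Pspace.
Qed.

Local Notation V := (phi n @: I0 n)%VS.

Definition isolated (S : pred nat) (q : nat) : bool :=
  [&& 1 < q, q < n, S q, ~~ S q.-1 & ~~ S q.+1]%N.

Lemma peaks_within_phi_I0_nonisolated S : (forall q, ~~ isolated S q) -> peaks_within S \in V.
Proof.
move=> noiso.
pose J := [set i : 'I_n | (i == 0 :> nat) || S i && S i.+1].
have -> : peaks_within S = peaks_within (peak_support J).
  apply/ffunP => u; rewrite !peaks_withinE; congr ((nat_of_bool _)%:R)%R.
  apply: eq_forallb_in => p; rewrite Peak_lowered => /and4P[p1 pn _ _].
  rewrite /peak_support /= !mem_image_inord ?inE ?inordK ?prednK; try lia.
  have [-> ->] : (p.-1 == 0) = false /\ (p == 0 :> nat) = false by split; lia.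
  by move: (noiso p); rewrite /isolated p1 pn /=; case: (S p.-1); case: (S p); case: (S p.+1).
have J0 : ord0 \in J by rewrite inE eqxx.
have c_neq0 : ((2 ^ #|J|)%:R : rat) != 0%R by rewrite pnatr_eq0 expn_eq0.
rewrite -(scalerK c_neq0 (peaks_within (peak_support J))) -phi_X; last by apply/exists_inP; exists ord0.
by apply/memvZ/memv_img/memv_span/image_f/exists_inP; exists ord0.
Qed.

Lemma peaks_within_split S p :
  peaks_within S = (peaks_within (predD1 S p) + peaks_within (predU1 p.+1 S)
                - peaks_within (predD1 (predU1 p.+1 S) p))%R.
Proof.
apply/ffunP => u; rewrite !ffunE !peaks_withinE.
case: (boolP [exists q in Peak u, val q == p]) => [/exists_inP[q qP /eqP qp] | /exists_inPn notp].
  have drop_p S' : [forall r in Peak u, predD1 S' p r] = false.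
    by apply/negbTE/forall_inPn; exists q; rewrite //= qp eqxx.
  rewrite !drop_p add0r subr0; congr ((nat_of_bool _)%:R)%R.
  apply: eq_forallb_in => r rP /=.
  by rewrite -qp (negbTE (Peak_nonadjacent qP rP)).
have keep_p S' : [forall r in Peak u, predD1 S' p r] = [forall r in Peak u, S' r].
  by apply: eq_forallb_in => r rP /=; rewrite notp.
by rewrite !keep_p addrK.
Qed.

Lemma isolated_local_change S S' p q : isolated S p ->
  (forall k, k != p -> k != p.+1 -> S' k = S k) -> (S' p ==> S' p.+1) ->
  isolated S' q -> (q == p.+1) || isolated S q && (q != p).
Proof.
case/and5P => _ _ _ Spl Spr agree mono /and5P[q1 qn S'q S'ql S'qr].
have [//|qp1] := eqVneq q p.+1; have [qp|qp] := eqVneq q p.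
  by move: mono S'qr; rewrite -qp S'q => /= ->.
rewrite /isolated -agree // q1 qn S'q andbT /=; apply/andP; split.
  have [->//|?] := eqVneq q.-1 p.+1; rewrite -agree //; lia.
have [qp'|?] := eqVneq q.+1 p; last by rewrite -agree //; lia.
by rewrite agree // (_ : q = p.-1) ?Spl // in S'q; lia.
Qed.

Lemma peaks_within_phi_I0 S : peaks_within S \in V.
Proof.
suff bounded k : forall S, (forall q, isolated S q -> n - k <= q)%N -> peaks_within S \in V.
  by apply: (bounded n) => q _; rewrite subnn.
(* Splitting at the leftmost isolated point p can only create the isolated point p+1. *)
elim: k => [|k IHk] {}S lbS.
  apply: peaks_within_phi_I0_nonisolated => q; apply/negP => iso_q.
  by have := lbS q iso_q; case/and5P: iso_q; lia.
have [iso_p | not_iso] := boolP (isolated S (n - k.+1)).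
  set p := n - k.+1 in iso_p.
  have p_gt1 : (1 < p)%N by case/andP: iso_p.
  have local S' : (forall k, k != p -> k != p.+1 -> S' k = S k) -> (S' p ==> S' p.+1) ->
      forall q, isolated S' q -> (n - k <= q)%N.
    move=> agree mono q /(isolated_local_change iso_p agree mono) /orP[/eqP -> | /andP[/lbS]].
      by rewrite /p; lia.
    by rewrite /p; lia.
  rewrite (peaks_within_split S p); apply: rpredB; first apply: rpredD.
  - by apply: IHk; apply: local => [k' kp _|] /=; rewrite ?kp ?eqxx.
  - apply: IHk; apply: local => [k' _ kp1|] /=; first by rewrite (negbTE kp1).
    by rewrite eqxx implybT.
  - by apply: IHk; apply: local => [k' kp kp1|] /=; rewrite ?kp ?(negbTE kp1) ?eqxx.
apply: IHk => q iso_q; have := lbS q iso_q.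
have : q != n - k.+1 by apply: contraNneq not_iso => <-.
lia.
Qed.

Definition peaks_between (F : {set 'I_n.+1}) (S : pred nat) : grpalg 'S_n :=
  (\sum_(u : 'S_n | (F \subset Peak u) && [forall p in Peak u, S p]) gelt u)%R.

Lemma peaks_betweenE F S u :
  peaks_between F S u = ((F \subset Peak u) && [forall p in Peak u, S p])%:R%R.
Proof. by rewrite /peaks_between sum_gelt ffunE. Qed.

Lemma peaks_between0 S : peaks_between set0 S = peaks_within S.
Proof. by apply/ffunP => u; rewrite peaks_betweenE peaks_withinE sub0set. Qed.

Lemma peaks_betweenD1 (F : {set 'I_n.+1}) S (p : 'I_n.+1) : p \in F ->
  peaks_between F S = (peaks_between (F :\ p) S - peaks_between (F :\ p) (predD1 S p))%R.
Proof.
move=> pF; apply/ffunP => u; rewrite !ffunE !peaks_betweenE -{1}(setD1K pF) subUset sub1set.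
have -> : [forall r in Peak u, predD1 S p r] = (p \notin Peak u) && [forall r in Peak u, S r].
  apply/forall_inP/andP => [SP | [pP /forall_inP SP] r rP].
    split; last by apply/forall_inP => r /SP /andP[].
    by apply/negP => /SP; rewrite /= eqxx.
  by rewrite /= SP // andbT; apply: contraNneq pP => /val_inj <-.
by case: (p \in _); case: (_ \subset _); case: [forall _ in _, _]; rewrite /= ?subr0 ?subrr.
Qed.

Lemma peaks_between_phi_I0 (F : {set 'I_n.+1}) S : peaks_between F S \in V.
Proof.
have [k] := ubnP #|F|; elim: k F S => // k IHk F S Fk.
have [-> | [p pF]] := set_0Vmem F; first by rewrite peaks_between0 peaks_within_phi_I0.
rewrite (peaks_betweenD1 S pF); apply: rpredB; apply: IHk;
  by move: Fk; rewrite (cardsD1 p F) pF.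
Qed.

Lemma Pk_phi_I0 (F : {set 'I_n.+1}) : Pk F \in V.
Proof.
have -> : Pk F = peaks_between F [pred k | k \in [seq val p | p in F]].
  apply/ffunP => u; rewrite peaks_betweenE /Pk sum_gelt ffunE eqEsubset andbC.
  congr ((nat_of_bool (_ && _))%:R)%R.
  by apply/subsetP/forall_inP => PF p /PF; rewrite /= (mem_image val_inj).
apply: peaks_between_phi_I0.
Qed.

Lemma Pspace_sub_phi_I0 : (Pspace n <= phi n @: I0 n)%VS.
Proof. by apply/span_subvP => _ /imageP[F _ ->]; apply: Pk_phi_I0. Qed.
End PeakImage.

Theorem theorem5p9 (n : nat) : (0 < n)%N ->
  (phi n @: I01 n)%VS = (phi n @: I0 n)%VS /\ (phi n @: I0 n)%VS = Pspace n.
Proof.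
case: n => // m _.
have I0_sub_I01 : (I0 m.+1 <= I01 m.+1)%VS.
  apply/span_subvP => _ /imageP[J /exists_inP[i iJ /eqP i0] ->].
  by apply/memv_span/image_f/exists_inP; exists i; rewrite ?i0.
have I0_I01 := limgS (phi m.+1) I0_sub_I01.
have I01_P := phi_I01_sub_Pspace m.
have P_I0 := Pspace_sub_phi_I0 m.
split; apply/subv_anti/andP; split => //.
- exact: subv_trans I01_P P_I0.
- exact: subv_trans I0_I01 I01_P.
Qed.
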